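(* Let $F:\mathbb C^n\to\mathbb C^n$ be a square system of polynomials with real coefficients and let $I\in\mathbb{IC}^n$ be a strong interval approximate zero of $F$. Then there exist $x\in I$ and $Y\in\mathbb C^{n\times n}$ invertible with $K_{x,Y}(I)\subset I$ and $\sqrt2\,\lVert\mathbf 1_n-Y\cdot\square\mathrm JF(I)\rVert_\infty<1$. If additionally $\{\bar z: z\in K_{x,Y}(I)\}\subset I$ (complex conjugation taken entrywise), then the unique zero of $F$ contained in $I$ is real.
   Context: $\mathbb{IR}$ is the set of compact real intervals $[a,b]$, with operations $X\circ Y=\{x\circ y: x\in X,y\in Y\}$ for $\circ\in\{+,-,\cdot,/\}$ ($0\notin Y$ for division). $\mathbb{IC}=\{X+iY: X,Y\in\mathbb{IR}\}$ is the set of rectangular complex intervals, where $X+iY=\{x+iy:x\in X,y\in Y\}$, with operations defined for $I=X+iY$, $J=W+iZ$ by $I\pm J=(X\pm W)+i(Y\pm Z)$, $I\cdot J=(X W-YZ)+i(XZ+YW)$, $I/J=\frac{XW+YZ}{WW+ZZ}+i\frac{YW-XZ}{WW+ZZ}$. Operations on $\mathbb{IC}^n$ are componentwise; for an interval matrix $A=(A_{i,j})\in\mathbb{IC}^{n\times n}$ and $I\in\mathbb{IC}^n$, $A\cdot I:=\sum_{j=1}^n I_j\cdot(A_{1,j},\dots,A_{n,j})^T$. A point $x\in\mathbb C^n$ is identified with the degenerate interval vector $[\mathrm{Re}\,x,\mathrm{Re}\,x]+i[\mathrm{Im}\,x,\mathrm{Im}\,x]$. An interval enclosure of a map $F:\mathbb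 C^n\to\mathbb C^m$ is a map $\square F:\mathbb{IC}^n\to\mathbb{IC}^m$ with $\{F(x):x\in I\}\subseteq\square F(I)$ for all $I$; $\square F$ and $\square\mathrm JF$ denote fixed interval enclosures of $F$ and of its Jacobian $\mathrm JF$. For $A\in\mathbb{IC}^{n\times n}$, $\lVert A\rVert_\infty:=\max_{B\in A}\max_{v\ne0}\lVert Bv\rVert_\infty/\lVert v\rVert_\infty$ with $\lVert v\rVert_\infty=\max_i|v_i|$. The Krawczyk operator is $K_{x,Y}(I):=x-Y\cdot\square F(x)+(\mathbf 1_n-Y\cdot\square\mathrm JF(I))(I-x)$ for $I\in\mathbb{IC}^n$, $x\in\mathbb C^n$, $Y\in\mathbb C^{n\times n}$ invertible. $I$ is a strong interval approximate zero of $F$ if there exist $x\in I$ and invertible $Y$ with $K_{x,Y}(I)\subset I$ and $\sqrt2\,\lVert\mathbf 1_n-Y\cdot\square\mathrm JF(I)\rVert_\infty<1$; such an $I$ contains exactly one zero of $F$ (its associated zero). *)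

From HB Require Import structures.
From mathcomp Require Import all_boot all_order all_algebra.
From mathcomp Require Import reals.
From mathcomp Require Import complex.
From mathcomp Require Import mpoly.

Set Implicit Arguments.
Unset Strict Implicit.
Unset Printing Implicit Defensive.

Import Order.TTheory GRing.Theory Num.Theory.
Local Open Scope ring_scope.

Section IntervalArith.
Variable R : realType.
Local Notation C := R[i].

Definition itv := (R * R)%type.
Definition in_itv (x : R) (X : itv) : Prop := X.1 <= x <= X.2.

(* X o Y = {x o y : x in X, y in Y}, written by its endpoints
   (the set of all x o y for compact intervals is exactly this interval). *)
Definition itv_add (X Y : itv) : itv := (X.1 + Y.1, X.2 + Y.2).
Definition itv_sub (X Y : itv) : itv := (X.1 - Y.2, X.2 - Y.1).
Definition itv_mul (X Y : itv) : itv :=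
  (Num.min (Num.min (X.1 * Y.1) (X.1 * Y.2)) (Num.min (X.2 * Y.1) (X.2 * Y.2)),
   Num.max (Num.max (X.1 * Y.1) (X.1 * Y.2)) (Num.max (X.2 * Y.1) (X.2 * Y.2))).

Definition citv := (itv * itv)%type.
Definition in_citv (z : C) (I : citv) : Prop :=
  in_itv (complex.Re z) I.1 /\ in_itv (complex.Im z) I.2.

Definition citv_add (I J : citv) : citv := (itv_add I.1 J.1, itv_add I.2 J.2).
Definition citv_sub (I J : citv) : citv := (itv_sub I.1 J.1, itv_sub I.2 J.2).
(* (X+iY)(W+iZ) = (XW - YZ) + i(XZ + YW) *)
Definition citv_mul (I J : citv) : citv :=
  (itv_sub (itv_mul I.1 J.1) (itv_mul I.2 J.2),
   itv_add (itv_mul I.1 J.2) (itv_mul I.2 J.1)).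

Definition citv_pt (z : C) : citv :=
  ((complex.Re z, complex.Re z), (complex.Im z, complex.Im z)).

Variable n : nat.
Definition cvec := 'I_n -> C.
Definition civec := 'I_n -> citv.
Definition cimx := 'I_n -> 'I_n -> citv.

Definition in_civec (z : cvec) (I : civec) : Prop := forall i, in_citv (z i) (I i).
Definition in_cimx (B : 'M[C]_n) (A : cimx) : Prop :=
  forall i j, in_citv (B i j) (A i j).

Definition civec_sub (J I : civec) : Prop :=
  forall z, in_civec z J -> in_civec z I.

Definition civec_pt (x : cvec) : civec := fun i => citv_pt (x i).
Definition cimx_pt (Y : 'M[C]_n) : cimx := fun i j => citv_pt (Y i j).

Definition civec_add (I J : civec) : civec := fun i => citv_add (I i) (J i).
Definition civec_sub_op (I J : civec) : civec := fun i => citv_sub (I i) (J i).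

(* A . I := sum_j I_j . (A_{1j},...,A_{nj})^T  (sum computed with +, from 0) *)
Definition cimx_vec (A : cimx) (I : civec) : civec :=
  fun i => \big[citv_add/citv_pt 0]_(j < n) citv_mul (I j) (A i j).

Definition cimx_mul (A M : cimx) : cimx :=
  fun i k => cimx_vec A (fun j => M j k) i.

Definition cimx_sub (A M : cimx) : cimx := fun i j => citv_sub (A i j) (M i j).

Definition cabs (z : C) : R :=
  Num.sqrt (complex.Re z ^+ 2 + complex.Im z ^+ 2).
Definition vnorm (v : cvec) : R := \big[Num.max/0]_(i < n) cabs (v i).

Definition ratio_of (A : cimx) (r : R) : Prop :=
  exists (B : 'M[C]_n) (v : cvec), in_cimx B A /\ (exists i, v i != 0) /\
    r = vnorm (fun i => \sum_(j < n) B i j * v j) / vnorm v.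

Definition is_cimx_norm (A : cimx) (m : R) : Prop :=
  ratio_of A m /\ forall r, ratio_of A r -> r <= m.

Definition poly_eval (p : {mpoly R[n]}) (z : cvec) : C :=
  (map_mpoly (real_complex R) p).@[z].

Definition sysF (F : 'I_n -> {mpoly R[n]}) (z : cvec) : cvec :=
  fun i => poly_eval (F i) z.

Definition jacF (F : 'I_n -> {mpoly R[n]}) (z : cvec) : 'M[C]_n :=
  \matrix_(i, j) poly_eval (mderiv j (F i)) z.

Definition is_encl_F (F : 'I_n -> {mpoly R[n]}) (bF : civec -> civec) : Prop :=
  forall I z, in_civec z I -> in_civec (sysF F z) (bF I).
Definition is_encl_JF (F : 'I_n -> {mpoly R[n]}) (bJF : civec -> cimx) : Prop :=
  forall I z, in_civec z I -> in_cimx (jacF F z) (bJF I).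

Definition krawczyk_mx (bJF : civec -> cimx) (Y : 'M[C]_n) (I : civec) : cimx :=
  cimx_sub (cimx_pt 1%:M) (cimx_mul (cimx_pt Y) (bJF I)).

Definition krawczyk (bF : civec -> civec) (bJF : civec -> cimx)
    (x : cvec) (Y : 'M[C]_n) (I : civec) : civec :=
  civec_add
    (civec_sub_op (civec_pt x) (cimx_vec (cimx_pt Y) (bF (civec_pt x))))
    (cimx_vec (krawczyk_mx bJF Y I) (civec_sub_op I (civec_pt x))).

Definition krawczyk_conds (bF : civec -> civec) (bJF : civec -> cimx)
    (x : cvec) (Y : 'M[C]_n) (I : civec) : Prop :=
  [/\ in_civec x I, Y \in unitmx,
      civec_sub (krawczyk bF bJF x Y I) I &
      exists m, is_cimx_norm (krawczyk_mx bJF Y I) m /\ Num.sqrt 2 * m < 1].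

Definition strong_iaz (bF : civec -> civec) (bJF : civec -> cimx) (I : civec) : Prop :=
  exists x Y, krawczyk_conds bF bJF x Y I.

Definition conj_sub (J I : civec) : Prop :=
  forall z, in_civec z J -> in_civec (fun i => (z i)^*%C) I.

Definition is_real_vec (z : cvec) : Prop := forall i, complex.Im (z i) = 0.

End IntervalArith.

(* Let z be a zero of F in I.  With M := \int_0^1 JF(x + t (z - x)) dt we have
   F z - F x = M (z - x), and M lies in the enclosure of JF(I) because I is a
   convex box; hence z = x - Y F(x) + (1 - Y M)(z - x) lies in K_{x,Y}(I).
   F has real coefficients, so the conjugate of z is again a zero, and by
   hypothesis it lies in I.  For two zeros z, w of F in I the same construction
   gives B := 1 - Y M' in 1 - Y JF(I) with B (w - z) = w - z, so w <> z would
   force ||1 - Y JF(I)|| >= 1, contradicting sqrt 2 ||1 - Y JF(I)|| < 1.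
   Hence z equals its conjugate, i.e. z is real. *)

From Pilot Require Import Defs.
From HB Require Import structures.
From mathcomp Require Import all_boot all_order all_algebra.
From mathcomp Require Import reals complex mpoly polyrcf ring lra.
Import Order.TTheory GRing.Theory Num.Theory.
Local Open Scope ring_scope.
Local Open Scope complex_scope.
Set Implicit Arguments.
Unset Strict Implicit.
Unset Printing Implicit Defensive.

Lemma mpoly_ring_ind (n : nat) (R : nzRingType) (P : {mpoly R[n]} -> Prop) :
    (forall c, P c%:MP) -> (forall i, P 'X_i) ->
    (forall p q, P p -> P q -> P (p + q)) -> (forall p q, P p -> P q -> P (p * q)) ->
  forall p, P p.
Proof.
move=> PC PX PD PM; elim/mpolyind; first by rewrite -mpolyC0.
move=> c m p _ _ Pp; apply: (PD) => //; rewrite -mul_mpolyC; apply: (PM) => //.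
rewrite mpolyXE_id; apply: (big_ind P); [by rewrite -mpolyC1 | exact: (PM) |].
move=> i _; elim: (m i) => [|k IHk]; first by rewrite expr0 -mpolyC1.
by rewrite exprS; apply: (PM).
Qed.

Lemma mderivXU (n : nat) (R : nzRingType) (i j : 'I_n) :
  mderiv j ('X_i : {mpoly R[n]}) = ((i == j)%:R)%:MP.
Proof.
rewrite mderivX mnm1E; case: eqP => [->|_]; last by rewrite scale0r mpolyC0.
suff -> : (U_(j) - U_(j))%MM = 0%MM by rewrite mpolyX0 scale1r mpolyC1.
by apply/mnmP => k; rewrite mnmBE subnn mnm0E.
Qed.

Section PolyIntegral.
Variable K : numFieldType.
Implicit Types p q : {poly K}.

(* The integral of q over [0, 1], computed termwise from \int_0^1 t^k dt = 1/(k+1). *)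
Definition int01 q : K := \sum_(k < size q) q`_k / k.+1%:R.

Lemma int01_wide N q : (size q <= N)%N -> int01 q = \sum_(k < N) q`_k / k.+1%:R.
Proof.
move=> qN; rewrite /int01 (big_ord_widen N (fun k => q`_k / k.+1%:R) qN) big_mkcond /=.
by apply: eq_bigr => k _; case: ltnP => // /(nth_default 0) ->; rewrite mul0r.
Qed.

Lemma int01_0 : int01 0 = 0.
Proof. by rewrite /int01 size_poly0 big_ord0. Qed.

Lemma int01D p q : int01 (p + q) = int01 p + int01 q.
Proof.
rewrite !(@int01_wide (maxn (size p) (size q))) ?size_polyD ?leq_maxl ?leq_maxr //.
by rewrite -big_split; apply: eq_bigr => k _; rewrite coefD mulrDl.
Qed.

Lemma int01Z c q : int01 (c *: q) = c * int01 q.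
Proof.
rewrite (@int01_wide (size q)) ?size_scale_leq // /int01 mulr_sumr.
by apply: eq_bigr => k _; rewrite coefZ mulrA.
Qed.

Lemma int01_lincomb (I : finType) (c : I -> K) (Q : I -> {poly K}) :
  int01 (\sum_i c i *: Q i) = \sum_i c i * int01 (Q i).
Proof.
rewrite (big_morph int01 int01D int01_0); apply: eq_bigr => i _; exact: int01Z.
Qed.

Lemma int01_deriv q : int01 q^`() = q.[1] - q.[0].
Proof.
have qS : (size q <= (size q).+1)%N by [].
have dq : (size q^`() <= size q)%N.
  by have [->|/lt_size_deriv/ltnW //] := eqVneq q 0; rewrite deriv0.
rewrite (@int01_wide (size q)) //.
rewrite (horner_coef_wide 1 qS) horner_coef0 big_ord_recl /= expr0 mulr1 addrC addKr.
apply: eq_bigr => k _; rewrite coef_deriv expr1n mulr1 -[_ *+ k.+1]mulr_natr.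
by rewrite mulfK ?pnatr_eq0 // /bump leq0n add1n.
Qed.

Definition prim q : {poly K} :=
  \poly_(k < (size q).+1) (if k is k'.+1 then q`_k' / k%:R else 0).

Lemma deriv_prim q : (prim q)^`() = q.
Proof.
apply/polyP => k; rewrite coef_deriv coef_poly ltnS.
case: ltnP => qk; first by rewrite -[_ *+ k.+1]mulr_natr divfK ?pnatr_eq0.
by rewrite mul0rn nth_default.
Qed.

End PolyIntegral.

Lemma int01_in_itv (R : realType) (r : {poly R}) (X : itv R) :
  (forall t, 0 <= t <= 1 -> Defs.in_itv r.[t] X) -> Defs.in_itv (int01 r) X.
Proof.
move=> rX; rewrite -[r]deriv_prim int01_deriv.
have [c] := poly_mvt (prim r) (@ltr01 R); rewrite in_itv /= => /andP[c0 c1] ->.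
by rewrite deriv_prim subr0 mulr1; apply: rX; rewrite !ltW.
Qed.

Section RealFunctional.
Variables (R : realType) (phi : {additive R[i] -> R}).
Hypothesis phiM : forall a s, phi (a * s%:C) = phi a * s.

Lemma size_map_poly_leq (q : {poly R[i]}) : (size (map_poly phi q) <= size q)%N.
Proof. by rewrite map_polyE (leq_trans (size_Poly _)) ?size_map. Qed.

Lemma horner_map_real (q : {poly R[i]}) (t : R) : (map_poly phi q).[t] = phi q.[t%:C].
Proof.
rewrite (horner_coef_wide _ (size_map_poly_leq q)) (horner_coef_wide _ (leqnn _)).
by rewrite raddf_sum; apply: eq_bigr => k _; rewrite coef_map -rmorphXn phiM.
Qed.

Lemma int01_map_real (q : {poly R[i]}) : phi (int01 q) = int01 (map_poly phi q).
Proof.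
rewrite (int01_wide (size_map_poly_leq q)) raddf_sum; apply: eq_bigr => k _.
by rewrite coef_map -(rmorph_nat (real_complex R)) -fmorphV phiM.
Qed.

Lemma int01_in_itv_real (q : {poly R[i]}) (X : itv R) :
    (forall t, 0 <= t <= 1 -> Defs.in_itv (phi q.[t%:C]) X) ->
  Defs.in_itv (phi (int01 q)) X.
Proof.
by move=> qX; rewrite int01_map_real; apply: int01_in_itv => t /qX; rewrite horner_map_real.
Qed.

End RealFunctional.

Lemma Re_mul_real (R : rcfType) (a : R[i]) (s : R) : complex.Re (a * s%:C) = complex.Re a * s.
Proof. by case: a => ? ? /=; rewrite mulr0 subr0. Qed.

Lemma Im_mul_real (R : rcfType) (a : R[i]) (s : R) : complex.Im (a * s%:C) = complex.Im a * s.
Proof. by case: a => ? ? /=; rewrite mulr0 add0r. Qed.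

Lemma int01_in_citv (R : realType) (q : {poly R[i]}) (J : citv R) :
  (forall t, 0 <= t <= 1 -> in_citv q.[t%:C] J) -> in_citv (int01 q) J.
Proof.
move=> qJ; split.
  by apply: (int01_in_itv_real (@Re_mul_real R)) => t /qJ [].
by apply: (int01_in_itv_real (@Im_mul_real R)) => t /qJ [].
Qed.

Section PolyEval.
Variables (R : realType) (n : nat).
Implicit Types (p q : {mpoly R[n]}) (z w : cvec R n).

Lemma poly_evalC c z : poly_eval c%:MP z = c%:C.
Proof. by rewrite /poly_eval map_mpolyC mevalC. Qed.

Lemma poly_evalXU i z : poly_eval 'X_i z = z i.
Proof. by rewrite /poly_eval map_mpolyX mevalXU. Qed.

Lemma poly_evalD p q z : poly_eval (p + q) z = poly_eval p z + poly_eval q z.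
Proof. by rewrite /poly_eval rmorphD mevalD. Qed.

Lemma poly_evalM p q z : poly_eval (p * q) z = poly_eval p z * poly_eval q z.
Proof. by rewrite /poly_eval rmorphM mevalM. Qed.

Lemma eq_poly_eval p z w : z =1 w -> poly_eval p z = poly_eval p w.
Proof. by move=> zw; rewrite /poly_eval (meval_eq _ zw). Qed.

Lemma poly_eval_conj p z : poly_eval p (fun i => (z i)^*) = (poly_eval p z)^*.
Proof.
elim/mpoly_ring_ind: p => [c|i|p q IHp IHq|p q IHp IHq].
- by rewrite !poly_evalC conjc_real.
- by rewrite !poly_evalXU.
- by rewrite !poly_evalD IHp IHq rmorphD.
- by rewrite !poly_evalM IHp IHq rmorphM.
Qed.

Variables (x d : cvec R n).

(* The polynomial t |-> p (x + t d).  It is locked because unifying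
   [line_poly p] with [line_poly q] would otherwise unfold [meval] and diverge. *)
Definition line_poly : {mpoly R[n]} -> {poly R[i]} := locked (fun p =>
  (map_mpoly polyC (map_mpoly (real_complex R) p)).@[fun k => (x k)%:P + d k *: 'X]).

Lemma line_polyC c : line_poly c%:MP = (c%:C)%:P.
Proof. by rewrite /line_poly -lock !map_mpolyC mevalC. Qed.

Lemma line_polyXU i : line_poly 'X_i = (x i)%:P + d i *: 'X.
Proof. by rewrite /line_poly -lock !map_mpolyX mevalXU. Qed.

Lemma line_polyD p q : line_poly (p + q) = line_poly p + line_poly q.
Proof. by rewrite /line_poly -lock !raddfD. Qed.

Lemma line_polyM p q : line_poly (p * q) = line_poly p * line_poly q.
Proof. by rewrite /line_poly -lock !rmorphM. Qed.

Lemma horner_line_poly p (t : R[i]) :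
  (line_poly p).[t] = poly_eval p (fun k => x k + t * d k).
Proof.
elim/mpoly_ring_ind: p => [c|i|p q IHp IHq|p q IHp IHq].
- by rewrite line_polyC hornerC poly_evalC.
- by rewrite line_polyXU poly_evalXU hornerD hornerC hornerZ hornerX mulrC.
- by rewrite line_polyD hornerD IHp IHq poly_evalD.
- by rewrite line_polyM hornerM IHp IHq poly_evalM.
Qed.

Lemma deriv_line_poly p :
  (line_poly p)^`() = \sum_j d j *: line_poly (mderiv j p).
Proof.
elim/mpoly_ring_ind: p => [c|i|p q IHp IHq|p q IHp IHq].
- rewrite line_polyC derivC big1 // => j _.
  by rewrite mderivC -mpolyC0 line_polyC scaler0.
- rewrite line_polyXU derivD derivC derivZ derivX add0r (bigD1 i) //= big1 => [|j ji].
    by rewrite mderivXU eqxx line_polyC rmorph1 addr0.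
  by rewrite mderivXU eq_sym (negbTE ji) line_polyC rmorph0 scaler0.
- rewrite line_polyD derivD IHp IHq -big_split; apply: eq_bigr => j _ /=.
  by rewrite mderivD line_polyD scalerDr.
- rewrite line_polyM derivM IHp IHq mulr_suml mulr_sumr -big_split.
  apply: eq_bigr => j _ /=.
  by rewrite mderivM line_polyD !line_polyM scalerDr scalerAl scalerAr.
Qed.

End PolyEval.

Section IntervalInclusion.
Variable R : realType.
Local Notation C := R[i].
Implicit Types (x y u p q : R) (X Y : itv R) (z w : C) (I J : citv R).

Lemma in_itvD x y X Y :
  Defs.in_itv x X -> Defs.in_itv y Y -> Defs.in_itv (x + y) (itv_add X Y).
Proof. by move=> /andP[? ?] /andP[? ?]; apply/andP; split; rewrite lerD. Qed.

Lemma in_itvB x y X Y :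
  Defs.in_itv x X -> Defs.in_itv y Y -> Defs.in_itv (x - y) (itv_sub X Y).
Proof. by move=> /andP[? ?] /andP[? ?]; apply/andP; split; rewrite lerB. Qed.

Lemma in_itv_mulr x y X : Defs.in_itv x X ->
  Defs.in_itv (x * y) (Num.min (X.1 * y) (X.2 * y), Num.max (X.1 * y) (X.2 * y)).
Proof.
move=> /andP[x1 x2]; apply/andP; rewrite ge_min le_max /=.
by case: (lerP 0 y) => y0; split; apply/orP; [left|right|right|left]; nra.
Qed.

Lemma in_itv_mull x y Y : Defs.in_itv y Y ->
  Defs.in_itv (x * y) (Num.min (x * Y.1) (x * Y.2), Num.max (x * Y.1) (x * Y.2)).
Proof. by rewrite ![x * _]mulrC; apply: in_itv_mulr. Qed.

Lemma in_itv_hull u p q p1 p2 q1 q2 :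
    Defs.in_itv u (Num.min p q, Num.max p q) ->
    Defs.in_itv p (p1, p2) -> Defs.in_itv q (q1, q2) ->
  Defs.in_itv u (Num.min p1 q1, Num.max p2 q2).
Proof.
move=> /andP[/= ul uu] /andP[/= pl pu] /andP[/= ql qu]; apply/andP; split => /=.
- by apply: le_trans ul; rewrite le_min !ge_min pl ql !orbT.
- by apply: le_trans uu _; rewrite ge_max !le_max pu qu !orbT.
Qed.

Lemma in_itvM x y X Y :
  Defs.in_itv x X -> Defs.in_itv y Y -> Defs.in_itv (x * y) (itv_mul X Y).
Proof.
move=> xX yY.
exact: in_itv_hull (in_itv_mulr y xX) (in_itv_mull _ yY) (in_itv_mull _ yY).
Qed.

Lemma in_citvD z w I J : in_citv z I -> in_citv w J -> in_citv (z + w) (citv_add I J).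
Proof. by case: z w => [a b] [c e] [? ?] [? ?]; split; apply: in_itvD. Qed.

Lemma in_citvB z w I J : in_citv z I -> in_citv w J -> in_citv (z - w) (citv_sub I J).
Proof. by case: z w => [a b] [c e] [? ?] [? ?]; split; apply: in_itvB. Qed.

Lemma in_citvM z w I J : in_citv z I -> in_citv w J -> in_citv (z * w) (citv_mul I J).
Proof.
by case: z w => [a b] [c e] [? ?] [? ?]; split; [apply: in_itvB | apply: in_itvD];
  apply: in_itvM.
Qed.

Lemma in_citv_pt z : in_citv z (citv_pt z).
Proof. by rewrite /in_citv /Defs.in_itv /= !lexx. Qed.

Lemma in_citv_sum (T : finType) (F : T -> C) (J : T -> citv R) :
    (forall j, in_citv (F j) (J j)) ->
  in_citv (\sum_j F j) (\big[@citv_add R/citv_pt 0]_j J j).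
Proof.
move=> FJ; apply: (big_ind2 (@in_citv R)) => // [|z Iz w Iw]; first exact: in_citv_pt.
exact: in_citvD.
Qed.

End IntervalInclusion.

Section IntervalMatrices.
Variables (R : realType) (n : nat).
Local Notation C := R[i].
Implicit Types (v x : cvec R n) (B M Y : 'M[C]_n) (A : cimx R n) (J : civec R n).

Definition mxv B v : cvec R n := fun i => \sum_j B i j * v j.

Lemma in_civec_pt x : in_civec x (civec_pt x).
Proof. by move=> i; apply: in_citv_pt. Qed.

Lemma in_cimx_pt Y : in_cimx Y (cimx_pt Y).
Proof. by move=> i j; apply: in_citv_pt. Qed.

Lemma in_cimx_vec B A v J : in_cimx B A -> in_civec v J -> in_civec (mxv B v) (cimx_vec A J).
Proof. by move=> BA vJ i; apply: in_citv_sum => j; rewrite mulrC; apply: in_citvM. Qed.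

Lemma in_cimx_mul B M A A' :
  in_cimx B A -> in_cimx M A' -> in_cimx (B *m M) (cimx_mul A A').
Proof.
move=> BA MA' i k; rewrite mxE.
exact: (in_cimx_vec (v := fun j => M j k) (J := fun j => A' j k) BA (fun j => MA' j k)).
Qed.

Lemma in_cimx_sub B M A A' :
  in_cimx B A -> in_cimx M A' -> in_cimx (B - M) (cimx_sub A A').
Proof. by move=> BA MA' i j; rewrite !mxE; apply: in_citvB. Qed.

Lemma mxv_colE B v i : mxv B v i = (B *m \col_j v j) i 0.
Proof. by rewrite mxE; apply: eq_bigr => j _; rewrite mxE. Qed.

Lemma mxv_krawczyk Y M v i : mxv (1%:M - Y *m M) v i = v i - mxv Y (mxv M v) i.
Proof.
rewrite !mxv_colE.
have -> : \col_j mxv M v j = M *m \col_j v j by apply/colP => j; rewrite mxE mxv_colE.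
by rewrite mulmxBl mul1mx mulmxA !mxE.
Qed.

End IntervalMatrices.

Section Krawczyk.
Variables (R : realType) (n : nat).
Local Notation C := R[i].
Implicit Types (x z w v : cvec R n) (I : civec R n) (Y M : 'M[C]_n).

Lemma in_civec_segment I x z (t : R) : in_civec x I -> in_civec z I -> 0 <= t <= 1 ->
  in_civec (fun k => x k + t%:C * (z k - x k)) I.
Proof.
move=> xI zI /andP[t0 t1] k; move: (xI k) (zI k).
case: (x k) (z k) => [a b] [c e]; rewrite /in_citv /Defs.in_itv /=.
by move=> [/andP[? ?] /andP[? ?]] [/andP[? ?] /andP[? ?]]; split; apply/andP; split; nra.
Qed.

Lemma cabs_gt0 (a : C) : a != 0 -> 0 < cabs a.
Proof.
case: a => a b ab0; rewrite /cabs /= sqrtr_gt0 lt_neqAle addr_ge0 ?sqr_ge0 // andbT.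
rewrite eq_sym paddr_eq0 ?sqr_ge0 // !sqrf_eq0.
by apply: contra ab0 => /andP[/eqP-> /eqP->].
Qed.

Lemma cabs_le_vnorm v i : cabs (v i) <= vnorm v.
Proof. exact: le_bigmax. Qed.

Lemma cimx_norm_ge1 (A : cimx R n) m B v :
  is_cimx_norm A m -> in_cimx B A -> (exists i, v i != 0) -> mxv B v =1 v -> 1 <= m.
Proof.
move=> [_ m_max] BA [i vi] Bv.
have vpos : 0 < vnorm v := lt_le_trans (cabs_gt0 vi) (cabs_le_vnorm v i).
have <- : vnorm (mxv B v) / vnorm v = 1.
  have -> : vnorm (mxv B v) = vnorm v by apply: eq_bigr => j _; rewrite Bv.
  by rewrite divff ?gt_eqF.
by apply: m_max; exists B, v; split=> //; split=> //; exists i.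
Qed.

Variables (F : 'I_n -> {mpoly R[n]}) (bF : civec R n -> civec R n) (bJF : civec R n -> cimx R n).
Hypotheses (hF : is_encl_F F bF) (hJF : is_encl_JF F bJF).

(* M := \int_0^1 JF(x + t (z - x)) dt, entrywise. *)
Lemma slope_matrix I x z : in_civec x I -> in_civec z I ->
  exists2 M, in_cimx M (bJF I) &
    forall i, mxv M (fun k => z k - x k) i = sysF F z i - sysF F x i.
Proof.
move=> xI zI; set d := fun k => z k - x k.
exists (\matrix_(i, j) int01 (line_poly x d (mderiv j (F i)))) => [i j | i].
  rewrite mxE; apply: int01_in_citv => t t01; rewrite horner_line_poly.
  by have := hJF (in_civec_segment xI zI t01) i j; rewrite mxE.
rewrite /mxv /sysF; under eq_bigr do rewrite mxE mulrC.
rewrite -int01_lincomb -deriv_line_poly int01_deriv !horner_line_poly.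
by congr (_ - _); apply: eq_poly_eval => k; rewrite ?mul1r ?mul0r /d ?addr0 // addrC subrK.
Qed.

Lemma in_krawczyk_mx I Y M :
  in_cimx M (bJF I) -> in_cimx (1%:M - Y *m M) (krawczyk_mx bJF Y I).
Proof. by move=> MI; apply: in_cimx_sub (in_cimx_pt _) (in_cimx_mul (in_cimx_pt Y) MI). Qed.

Lemma krawczyk_mem_zero I x Y z : in_civec x I -> in_civec z I ->
  sysF F z =1 (fun=> 0) -> in_civec z (krawczyk bF bJF x Y I).
Proof.
move=> xI zI Fz; have [M MI Md] := slope_matrix xI zI.
have zE i : z i = (x i - mxv Y (sysF F x) i) + mxv (1%:M - Y *m M) (fun k => z k - x k) i.
  rewrite mxv_krawczyk.
  have -> : mxv Y (mxv M (fun k => z k - x k)) i = - mxv Y (sysF F x) i.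
    rewrite /mxv -sumrN; apply: eq_bigr => j _.
    by rewrite -/(mxv M _ j) Md (Fz j) sub0r mulrN.
  ring.
move=> i; rewrite zE; apply: in_citvD.
  apply: in_citvB (in_citv_pt _) _.
  exact: in_cimx_vec (in_cimx_pt Y) (hF (in_civec_pt x)) i.
apply: in_cimx_vec (in_krawczyk_mx Y MI) _ i => k.
exact: in_citvB (zI k) (in_citv_pt _).
Qed.

Lemma krawczyk_zero_unique I Y m z w : in_civec z I -> in_civec w I ->
    sysF F z =1 (fun=> 0) -> sysF F w =1 (fun=> 0) ->
    is_cimx_norm (krawczyk_mx bJF Y I) m -> m < 1 ->
  z =1 w.
Proof.
move=> zI wI Fz Fw Km m1; have [M MI Md] := slope_matrix zI wI.
have fixed : mxv (1%:M - Y *m M) (fun k => w k - z k) =1 (fun k => w k - z k).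
  move=> i; rewrite mxv_krawczyk -[RHS]subr0; congr (_ - _).
  by apply: big1 => j _; rewrite Md (Fz j) (Fw j) subrr mulr0.
move=> i; apply/eqP; rewrite eq_sym -subr_eq0; apply/negP => /negP wz.
have := cimx_norm_ge1 Km (in_krawczyk_mx Y MI) (ex_intro _ i wz) fixed.
by rewrite leNgt m1.
Qed.

End Krawczyk.

Lemma lt1_sqrt2_mul (R : realType) (m : R) : Num.sqrt 2 * m < 1 -> m < 1.
Proof.
have s1 : 1 <= Num.sqrt (2 : R) by rewrite -[X in X <= _]sqrtr1 ler_sqrt //; lra.
by move=> sm; case: (lerP m 0) => m0; nra.
Qed.

Theorem lemma4p11 (R : realType) (n : nat) (F : 'I_n -> {mpoly R[n]})
    (bF : civec R n -> civec R n) (bJF : civec R n -> cimx R n)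
    (hF : is_encl_F F bF) (hJF : is_encl_JF F bJF)
    (I : civec R n) (hI : strong_iaz bF bJF I) :
  (exists (x : cvec R n) (Y : 'M[R[i]]_n), krawczyk_conds bF bJF x Y I) /\
  (forall (x : cvec R n) (Y : 'M[R[i]]_n),
     krawczyk_conds bF bJF x Y I ->
     conj_sub (krawczyk bF bJF x Y I) I ->
     forall z : cvec R n, in_civec z I -> sysF F z = (fun _ => 0) ->
     is_real_vec z).
Proof.
split=> // x Y [xI _ _ [m [Km sqrt2m]]] Kconj z zI Fz0.
have Fz : sysF F z =1 (fun=> 0) by move=> i; rewrite Fz0.
have Fzbar : sysF F (fun i => (z i)^*) =1 (fun=> 0).
  by move=> i; rewrite /sysF poly_eval_conj -/(sysF F z i) Fz conjc0.
have zbarI := Kconj z (krawczyk_mem_zero hF hJF Y xI zI Fz).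
have zbar := krawczyk_zero_unique hJF zI zbarI Fz Fzbar Km (lt1_sqrt2_mul sqrt2m).
by move=> i; move: (zbar i); case: (z i) => a b [] /=; lra.
Qed.
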